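(* Let $G_1$ and $G_2$ be OPERA DAGs with $G_1\sim G_2$. Then the layerings $\phi_{LPL}^{G_1}$ and $\phi_{LPL}^{G_2}$ are consistent: $\phi_{LPL}^{G_1}(v)=\phi_{LPL}^{G_2}(v)$ for every vertex $v$ contained in both $G_1$ and $G_2$. Equivalently, the H-OPERA DAGs obtained from $G_1$ and $G_2$ by the longest-path layering are consistent.
   Context: An OPERA DAG is a finite directed acyclic graph $G=(V,E)$ of events, where an edge $(u,v)$ means that $u$ references its parent $v$. $G[v]$ denotes the subgraph induced on $v$ and all vertices reachable from $v$ (its ancestors), and $G_1\sim G_2$ means $G_1[v]=G_2[v]$ for every $v$ in both DAGs. The longest-path layering $\phi_{LPL}^{G}:V\to\mathbb{Z}$ is defined recursively. $\phi_{LPL}^G(v)=1$ if $v$ has no parents in $G$, and otherwise $\phi_{LPL}^G(v)=1+\max\{\phi_{LPL}^G(u): (v,u)\in E\}$. The H-OPERA DAG is the hierarchical graph $(V,E,\phi_{LPL}^G)$. *)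

From mathcomp Require Import all_boot.
Set Implicit Arguments. Unset Strict Implicit. Unset Printing Implicit Defensive.

(* An OPERA DAG over a finite universe of events T: a finite vertex set V and
   an edge relation E, where [E u v] means that u references its parent v. *)
Record opera_dag (T : finType) := OperaDag {
  dV : {set T};
  dE : rel T;
  dE_in : forall u v, dE u v -> (u \in dV) && (v \in dV);
  dE_acyclic : forall u v, dE u v -> ~~ connect dE v u
}.

Section Defs.
Variable T : finType.

(* Vertex set of G[v]: v together with all vertices reachable from v. *)
Definition anc (G : opera_dag T) (v : T) : {set T} :=
  [set u | connect (dE G) v u].

Definition induced_eq (G1 G2 : opera_dag T) (v : T) : Prop :=
  anc G1 v = anc G2 v /\
  (forall x y, x \in anc G1 v -> y \in anc G1 v -> dE G1 x y = dE G2 x y).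

Definition dag_sim (G1 G2 : opera_dag T) : Prop :=
  forall v, v \in dV G1 -> v \in dV G2 -> induced_eq G1 G2 v.

Fixpoint lpl_fuel (E : rel T) (n : nat) (v : T) : nat :=
  match n with
  | 0 => 1
  | n'.+1 => 1 + \max_(u | E v u) lpl_fuel E n' u
  end.

(* Longest-path layering: since every directed path of a DAG on T has fewer
   than #|T| edges, depth #|T| suffices for the recursion to bottom out. *)
Definition lpl (G : opera_dag T) (v : T) : nat := lpl_fuel (dE G) #|T| v.

End Defs.

From mathcomp Require Import all_boot.

Set Implicit Arguments.
Unset Strict Implicit.
Unset Printing Implicit Defensive.

(* The recursion defining phi(v) only ever inspects the out-edges of vertices
   reachable from v, i.e. of vertices of G[v].  Since G[v] is closed under
   out-edges, G1[v] = G2[v] forces G1 and G2 to have the same out-edges at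
   every such vertex, so both recursions unfold identically. *)

Section Layering.
Variable T : finType.

Lemma eq_lpl_fuel (e1 e2 : rel T) (u : T) :
  (forall x, connect e1 u x -> e1 x =1 e2 x) ->
  forall n, lpl_fuel e1 n u = lpl_fuel e2 n u.
Proof.
move=> eq_out n; elim: n u eq_out => [//|n IHn] u eq_out /=.
rewrite (eq_bigl (e2 u)); last exact: eq_out (connect0 e1 u).
apply/congr1/eq_bigr => w uw; apply: IHn => x wx.
apply: (eq_out); apply: connect_trans wx.
by apply: connect1; rewrite eq_out.
Qed.

Lemma anc_step (G : opera_dag T) (v x w : T) :
  x \in anc G v -> dE G x w -> w \in anc G v.
Proof. by rewrite !inE => vx xw; apply: connect_trans vx (connect1 xw). Qed.

Lemma induced_eq_out_edges (G1 G2 : opera_dag T) (v : T) :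
  induced_eq G1 G2 v ->
  forall x, x \in anc G1 v -> dE G1 x =1 dE G2 x.
Proof.
move=> [eq_anc eq_E] x vx w.
case E1: (dE G1 x w); first by rewrite -eq_E // (anc_step vx E1).
case E2: (dE G2 x w) => //.
have vw : w \in anc G1 v by rewrite eq_anc (anc_step _ E2) // -eq_anc.
by rewrite -E1 eq_E.
Qed.

End Layering.

Theorem mainTheorem5 (T : finType) (G1 G2 : opera_dag T) :
  dag_sim G1 G2 ->
  forall v, v \in dV G1 -> v \in dV G2 -> lpl G1 v = lpl G2 v.
Proof.
move=> sim12 v vG1 vG2; apply: eq_lpl_fuel => x vx.
by apply: (induced_eq_out_edges (sim12 v vG1 vG2)); rewrite inE.
Qed.
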